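(* Let $K$ be an infinite field and let $\mathcal{A} \subseteq (\mathbb{Z}_{\ge 0})^n$ be a support set all of whose elements are monomials of the same type. Let $G \subseteq S_n$ be a subgroup acting transitively on the set of all monomials of this type. Then for general coefficients of $f \in K^{\mathcal{A}}$ with respect to $\mathcal{A}$, the ideal $(G.f) \subseteq K[x_1,\dots,x_n]$ is a monomial ideal, and it is generated by the orbit $G.m$ of any monomial $m$ occurring in $f$ (equivalently, it is generated by all monomials of this type).
   Context: A support set is a non-empty finite subset $\mathcal{A}\subseteq(\mathbb{Z}_{\ge0})^n$; monomials are identified with exponent vectors. The type of a monomial is the partition of its degree obtained by listing its exponents in decreasing order; two monomials have the same type iff they are permutations of each other. $K^{\mathcal{A}}$ is identified with the polynomials whose support is contained in $\mathcal{A}$. $S_n$ acts by $\sigma.x_i = x_{\sigma(i)}$; $G.f$ is the orbit of $f$ and $(G.f)$ the ideal generated by it. ''For general coefficients of $f$ with respect to $\mathcal{A}$'' means: the set of $f\in K^{\mathcal{A}}$ for which the assertion holds contains a non-empty Zariski-open subset of $K^{\mathcal{A}}$. *)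

From HB Require Import structures.
From mathcomp Require Import all_boot all_order all_algebra all_fingroup.
From mathcomp Require Import mpoly.
Set Implicit Arguments. Unset Strict Implicit. Unset Printing Implicit Defensive.
Import GRing.Theory.
Local Open Scope ring_scope.

(* The type of a monomial (exponent vector): the partition of its degree
   obtained by listing its (nonzero) exponents in decreasing order. *)
Definition mtype (n : nat) (a : 'X_{1..n}) : seq nat :=
  sort (fun x y => (y <= x)%N) [seq e <- (a : seq nat) | e != 0%N].

Definition in_ideal (n : nat) (K : fieldType) (S : {mpoly K[n]} -> Prop)
  (p : {mpoly K[n]}) : Prop :=
  exists gs : seq ({mpoly K[n]} * {mpoly K[n]}),
    (forall q, q \in gs -> S q.2) /\ p = \sum_(q <- gs) q.1 * q.2.

Definition same_ideal (n : nat) (K : fieldType) (S T : {mpoly K[n]} -> Prop) : Prop :=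
  forall p, in_ideal S p <-> in_ideal T p.

(* the orbit G.f of f, for the action sigma.x_i = x_(sigma i) (msym) *)
Definition orbit_poly (n : nat) (K : fieldType) (G : {group 'S_n})
  (f : {mpoly K[n]}) : {mpoly K[n]} -> Prop :=
  fun g => exists2 s, s \in G & g = msym s f.

Definition monomials_of_type (n : nat) (K : fieldType) (t : seq nat)
  : {mpoly K[n]} -> Prop :=
  fun g => exists2 b : 'X_{1..n}, mtype b = t & g = 'X_[b].

(* K^A, A = [:: a_0; ...; a_(k-1)] a duplicate-free list, is identified with
   K^k via the coordinates f |-> (f@_(a_i))_i of a polynomial with support in A. *)
Definition coords (n : nat) (K : fieldType) (A : seq 'X_{1..n}) (f : {mpoly K[n]})
  : 'I_(size A) -> K := fun i => f@_(nth 0%MM A i).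

Definition zariski_open (k : nat) (K : fieldType) (U : ('I_k -> K) -> Prop) : Prop :=
  exists S : {mpoly K[k]} -> Prop,
    forall v, U v <-> exists h, S h /\ h.@[v] != 0.

Definition infinite_field (K : fieldType) : Prop :=
  forall s : seq K, exists x : K, x \notin s.

Arguments coords {n K} A f _.
Arguments orbit_poly {n K} G f _.
Arguments in_ideal {n K} S p.
Arguments same_ideal {n K} S T.
Arguments monomials_of_type {n} K t _.
Arguments zariski_open {k K} U.

From HB Require Import structures.
From mathcomp Require Import all_boot all_order all_algebra all_fingroup.
From mathcomp Require Import mpoly.
Set Implicit Arguments. Unset Strict Implicit. Unset Printing Implicit Defensive.
Import GRing.Theory.
Local Open Scope ring_scope.

(* Enumerate the monomials b_1, ..., b_N of the given type and choose s_k in G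
   with s_k(m0) = b_k, where m0 is the first element of A. For f supported on A,
   s_j.f = sum_k M(f)_jk X^b_k, where the entries of M(f) are linear forms in the
   coefficients of f. Whenever det M(f) != 0 the matrix can be inverted, so every
   X^b_k lies in the ideal (G.f); conversely every s.f is a combination of
   monomials of the type. Hence U = {det M != 0} works, and it is non-empty
   because M(X^m0) is the identity matrix. *)

Section IdealGeneration.
Variables (n : nat) (K : fieldType).
Implicit Types (S T : {mpoly K[n]} -> Prop) (p q : {mpoly K[n]}).

Lemma in_ideal0 T : in_ideal T 0.
Proof. by exists [::]; split => //; rewrite big_nil. Qed.

Lemma in_idealD T p q : in_ideal T p -> in_ideal T q -> in_ideal T (p + q).
Proof.
move=> [g1 [h1 ->]] [g2 [h2 ->]]; exists (g1 ++ g2); split; last by rewrite big_cat.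
by move=> r; rewrite mem_cat => /orP[/h1|/h2].
Qed.

Lemma in_idealM T c p : in_ideal T p -> in_ideal T (c * p).
Proof.
move=> [g [h ->]]; exists [seq (c * r.1, r.2) | r <- g]; split.
  by move=> r /mapP[r' /h Tr' ->].
by rewrite big_map mulr_sumr; apply: eq_bigr => r _; rewrite mulrA.
Qed.

Lemma in_idealZ T (c : K) p : in_ideal T p -> in_ideal T (c *: p).
Proof. by rewrite -mul_mpolyC; apply: in_idealM. Qed.

Lemma in_ideal_sum T m (F : 'I_m -> {mpoly K[n]}) :
  (forall j, in_ideal T (F j)) -> in_ideal T (\sum_(j < m) F j).
Proof.
by move=> TF; apply: (big_ind (in_ideal T)) => //; [apply: in_ideal0 | apply: in_idealD].
Qed.

Lemma in_ideal_gen T p : T p -> in_ideal T p.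
Proof.
move=> Tp; exists [:: (1, p)]; split; first by move=> r; rewrite inE => /eqP ->.
by rewrite big_seq1 mul1r.
Qed.

Lemma in_ideal_trans S T : (forall g, S g -> in_ideal T g) ->
  forall p, in_ideal S p -> in_ideal T p.
Proof.
move=> ST p [g [Sg ->]]; elim: g Sg => [|r g IHg] Sg; first by rewrite big_nil; apply: in_ideal0.
rewrite big_cons; apply: in_idealD.
  by apply/in_idealM/ST/Sg; rewrite mem_head.
by apply: IHg => q gq; apply: Sg; rewrite inE gq orbT.
Qed.

Lemma same_idealP S T : (forall g, S g -> in_ideal T g) ->
  (forall g, T g -> in_ideal S g) -> same_ideal S T.
Proof. by move=> ST TS p; split; apply: in_ideal_trans. Qed.

Lemma same_ideal_trans S T U : same_ideal S T -> same_ideal T U -> same_ideal S U.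
Proof. by move=> ST TU p; rewrite ST TU. Qed.

End IdealGeneration.

Section Monomials.
Variable n : nat.

Definition mperm (s : 'S_n) (m : 'X_{1..n}) : 'X_{1..n} :=
  [multinom m ((s^-1)%g i) | i < n].

Lemma msymX_mperm (R : nzRingType) (s : 'S_n) m :
  msym s ('X_[m] : {mpoly R[n]}) = 'X_[mperm s m].
Proof. exact: msymX. Qed.

Lemma perm_eq_mperm (s : 'S_n) m : perm_eq (mperm s m : seq nat) m.
Proof.
have enumE (m' : 'X_{1..n}) : (m' : seq nat) = [seq m' i | i <- enum 'I_n].
  by rewrite -[LHS](map_tnth_enum (multinom_val m')).
rewrite (enumE (mperm s m)) (enumE m).
have -> : [seq mperm s m i | i <- enum 'I_n] = map m (map (s^-1)%g (enum 'I_n)).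
  by rewrite -[RHS]map_comp; apply: eq_map => i; rewrite /mperm mnmE.
apply/perm_map/uniq_perm; first by rewrite map_inj_uniq ?enum_uniq //; apply: perm_inj.
  exact: enum_uniq.
by move=> i; rewrite mem_enum; apply/mapP; exists (s i); rewrite ?mem_enum ?permK.
Qed.

Lemma mtype_mperm (s : 'S_n) m : mtype (mperm s m) = mtype m.
Proof.
apply/perm_sortP; last exact/perm_filter/perm_eq_mperm.
- by move=> x y; apply: leq_total.
- by move=> x y z yx zy; apply: leq_trans zy yx.
- by move=> x y /andP[yx xy]; apply/eqP; rewrite eqn_leq xy yx.
Qed.

Lemma mpolyX_inj (R : nzRingType) : injective (fun m => 'X_[m] : {mpoly R[n]}).
Proof.
move=> a b /(congr1 (mcoeff a)); rewrite !mcoeffX eqxx.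
by case: (b =P a) => // _ /eqP; rewrite oner_eq0.
Qed.

Lemma sum_pred1_seq (T : eqType) (V : zmodType) (r : seq T) x (F : T -> V) :
  uniq r -> \sum_(y <- r) (if y == x then F y else 0) = if x \in r then F x else 0.
Proof.
elim: r => [|y r IHr] /= => [_|/andP[yr ur]]; first by rewrite big_nil.
rewrite big_cons IHr // inE; have [<-|_] := eqVneq y x; first by rewrite (negbTE yr) addr0.
by rewrite add0r.
Qed.

Lemma mpolyE_supp (R : nzRingType) (A : seq 'X_{1..n}) (f : {mpoly R[n]}) :
  uniq A -> {subset msupp f <= A} -> f = \sum_(a <- A) f@_a *: 'X_[a].
Proof.
move=> uA fA; apply/mpolyP => m; rewrite raddf_sum /=.
under eq_bigr => a _ do rewrite mcoeffZ mcoeffX mulr_natr mulrb.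
rewrite sum_pred1_seq //; case: ifP => // mA; apply/eqP; rewrite mcoeff_eq0.
by apply: contraFN mA => /fA.
Qed.

Lemma msym_coordsE (K : fieldType) (A : seq 'X_{1..n}) (f : {mpoly K[n]}) s :
  uniq A -> {subset msupp f <= A} ->
  msym s f = \sum_(i < size A) coords A f i *: 'X_[mperm s (nth 0%MM A i)].
Proof.
move=> uA fA; rewrite {1}(mpolyE_supp uA fA) (big_nth 0%MM) big_mkord linear_sum.
by apply: eq_bigr => i _; rewrite linearZ /= msymX_mperm.
Qed.

End Monomials.

Lemma invmx_combination (R : comUnitRingType) (V : lmodType R) m (M : 'M[R]_m)
  (x y : 'I_m -> V) : M \in unitmx ->
  (forall j, y j = \sum_k M j k *: x k) ->
  forall k, x k = \sum_j invmx M k j *: y j.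
Proof.
move=> Munit yE k.
transitivity (\sum_l (invmx M *m M) k l *: x l).
  rewrite mulVmx // (bigD1 k) //= big1 => [|l /negbTE lk]; rewrite mxE.
    by rewrite eqxx scale1r addr0.
  by rewrite eq_sym lk scale0r.
under [RHS]eq_bigr => j _ do rewrite yE scaler_sumr.
rewrite exchange_big; apply: eq_bigr => l _ /=.
by rewrite mxE scaler_suml; apply: eq_bigr => j _; rewrite scalerA.
Qed.

Section OrbitMatrix.
Variables (K : fieldType) (n : nat) (A : seq 'X_{1..n}) (G : {group 'S_n}).
Hypothesis A_neq0 : A != [::].
Hypothesis A_uniq : uniq A.
Hypothesis A_mtype : forall a b, a \in A -> b \in A -> mtype a = mtype b.
Hypothesis G_transitive : forall a b : 'X_{1..n}, mtype a = mtype (head 0%MM A) ->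
  mtype b = mtype (head 0%MM A) ->
  exists2 s, s \in G & msym s ('X_[a] : {mpoly K[n]}) = 'X_[b].

Local Notation m0 := (head 0%MM A).

Lemma mtype_head a : a \in A -> mtype a = mtype m0.
Proof. by move=> aA; apply: A_mtype => //; case: A A_neq0 => // c s _; rewrite mem_head. Qed.

Definition orbit_seq := [seq mperm s m0 | s <- enum G].
Definition orbit_mons := undup orbit_seq.
Local Notation N := (size orbit_mons).
Definition orbit_mon (k : 'I_N) := nth 0%MM orbit_mons k.

(* The first s in [enum G] with s(m0) = b_k. *)
Definition orbit_rep (k : 'I_N) : 'S_n :=
  nth 1%g (enum G) (index (orbit_mon k) orbit_seq).

Lemma orbit_rep_index k : (index (orbit_mon k) orbit_seq < size (enum G))%N.
Proof. by rewrite -(size_map (fun s => mperm s m0)) index_mem -mem_undup mem_nth. Qed.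

Lemma orbit_rep_in k : orbit_rep k \in G.
Proof. by rewrite -mem_enum mem_nth // orbit_rep_index. Qed.

Lemma mperm_orbit_rep k : mperm (orbit_rep k) m0 = orbit_mon k.
Proof.
rewrite -(nth_map 1%g 0%MM (fun s => mperm s m0)) ?orbit_rep_index // nth_index //.
by rewrite -mem_undup mem_nth.
Qed.

Lemma orbit_mon_eq j k : (orbit_mon j == orbit_mon k) = (j == k).
Proof. by rewrite nth_uniq ?undup_uniq. Qed.

Lemma mem_orbit_mons b : mtype b = mtype m0 -> b \in orbit_mons.
Proof.
move=> tb; have [s sG] := G_transitive (erefl _) tb.
rewrite msymX_mperm => /mpolyX_inj <-.
by rewrite mem_undup; apply: map_f; rewrite mem_enum.
Qed.

Lemma orbit_mon_onto b : mtype b = mtype m0 -> exists k, orbit_mon k = b.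
Proof.
move/mem_orbit_mons => bB.
by exists (Ordinal (etrans (index_mem _ _) bB)); rewrite /orbit_mon nth_index.
Qed.

Definition orbit_matrix (R : pzRingType) (v : 'I_(size A) -> R) : 'M[R]_N :=
  \matrix_(j, k) \sum_(i < size A)
    v i * (orbit_mon k == mperm (orbit_rep j) (nth 0%MM A i))%:R.

Definition orbit_det : {mpoly K[size A]} := \det (orbit_matrix (fun i => 'X_i)).

Lemma meval_orbit_det v : orbit_det.@[v] = \det (orbit_matrix v).
Proof.
rewrite -det_map_mx; congr (\det _); apply/matrixP => j k.
rewrite !mxE rmorph_sum; apply: eq_bigr => i _.
by rewrite rmorphM /= mevalXU rmorph_nat.
Qed.

Lemma orbit_matrix_head : orbit_matrix (coords A ('X_[m0] : {mpoly K[n]})) = 1%:M.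
Proof.
have A_gt0 : (0 < size A)%N by case: A A_neq0.
apply/matrixP => j k; rewrite !mxE (bigD1 (Ordinal A_gt0)) //= big1 => [|i i0].
  by rewrite /coords mcoeffX -nth0 eqxx mul1r addr0 nth0 mperm_orbit_rep orbit_mon_eq eq_sym.
rewrite /coords mcoeffX -nth0 nth_uniq // -(inj_eq val_inj) /= in i0 *.
by rewrite eq_sym (negbTE i0) mul0r.
Qed.

Lemma sum_orbit_mon_pred1 b : b \in orbit_mons ->
  \sum_k (orbit_mon k == b)%:R *: ('X_[orbit_mon k] : {mpoly K[n]}) = 'X_[b].
Proof.
move=> bB; transitivity (\sum_(c <- orbit_mons) (if c == b then 'X_[c] else 0 : {mpoly K[n]})).
  rewrite (big_nth 0%MM) big_mkord; apply: eq_bigr => k _.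
  by case: eqP; rewrite ?scale1r ?scale0r.
by rewrite sum_pred1_seq ?undup_uniq // bB.
Qed.

Section GenericPolynomial.
Variable f : {mpoly K[n]}.
Hypothesis f_supp : {subset msupp f <= A}.

Lemma msym_orbit_rep j :
  msym (orbit_rep j) f = \sum_k orbit_matrix (coords A f) j k *: 'X_[orbit_mon k].
Proof.
rewrite (msym_coordsE _ A_uniq f_supp).
under [RHS]eq_bigr => k _ do rewrite mxE scaler_suml.
rewrite exchange_big; apply: eq_bigr => i _ /=.
under eq_bigr => k _ do rewrite -scalerA.
rewrite -scaler_sumr sum_orbit_mon_pred1 // mem_orbit_mons //.
by rewrite mtype_mperm mtype_head // mem_nth.
Qed.

Lemma orbit_ideal_monomials_of_type :
  \det (orbit_matrix (coords A f)) != 0 ->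
  same_ideal (orbit_poly G f) (monomials_of_type K (mtype m0)).
Proof.
move=> det_neq0; apply: same_idealP => g.
  case=> s _ ->; rewrite (msym_coordsE _ A_uniq f_supp); apply: in_ideal_sum => i.
  apply/in_idealZ/in_ideal_gen; exists (mperm s (nth 0%MM A i)) => //.
  by rewrite mtype_mperm mtype_head // mem_nth.
case=> b /orbit_mon_onto[k <-] ->.
have Munit : orbit_matrix (coords A f) \in unitmx by rewrite unitmxE unitfE.
rewrite (invmx_combination Munit msym_orbit_rep); apply: in_ideal_sum => j.
by apply/in_idealZ/in_ideal_gen; exists (orbit_rep j); rewrite ?orbit_rep_in.
Qed.

End GenericPolynomial.

Lemma monomials_of_type_orbitX m : m \in A ->
  same_ideal (monomials_of_type K (mtype m0)) (orbit_poly G ('X_[m] : {mpoly K[n]})).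
Proof.
move=> mA; apply: same_idealP => g.
  case=> b tb ->; apply: in_ideal_gen.
  by have [s sG] := G_transitive (mtype_head mA) tb; exists s.
case=> s _ ->; apply: in_ideal_gen; rewrite msymX_mperm.
by exists (mperm s m); rewrite // mtype_mperm mtype_head.
Qed.

End OrbitMatrix.

Theorem theorem1p1 (K : fieldType) (n : nat) (A : seq 'X_{1..n})
  (G : {group 'S_n}) :
  infinite_field K ->
  A != [::] -> uniq A ->
  (forall a b, a \in A -> b \in A -> mtype a = mtype b) ->
  (forall a b : 'X_{1..n}, mtype a = mtype (head 0%MM A) ->
     mtype b = mtype (head 0%MM A) ->
     exists2 s, s \in G & msym s ('X_[a] : {mpoly K[n]}) = 'X_[b]) ->
  exists U : ('I_(size A) -> K) -> Prop,
    [/\ zariski_open U, (exists v, U v) &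
      forall f : {mpoly K[n]},
        (forall m, m \in msupp f -> m \in A) ->
        U (coords A f) ->
        same_ideal (orbit_poly G f) (monomials_of_type K (mtype (head 0%MM A)))
        /\ (forall m, m \in msupp f ->
              same_ideal (orbit_poly G f) (orbit_poly G 'X_[m]))].
Proof.
move=> _ A_neq0 A_uniq A_mtype G_transitive.
exists (fun v => \det (orbit_matrix G v) != 0); split.
- exists (eq^~ (orbit_det K A G)) => v; split => [det_neq0|[_ [-> det_neq0]]].
    by exists (orbit_det K A G); rewrite meval_orbit_det.
  by rewrite -meval_orbit_det.
- exists (coords A ('X_[head 0%MM A] : {mpoly K[n]})).
  by rewrite orbit_matrix_head // det1 oner_neq0.
move=> f f_supp det_neq0.
have f_type := orbit_ideal_monomials_of_type A_neq0 A_uniq A_mtype G_transitive f_supp det_neq0.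
split=> // m mf; apply: same_ideal_trans f_type _.
exact: (monomials_of_type_orbitX A_neq0 A_mtype G_transitive (f_supp _ mf)).
Qed.
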